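(* Let $s,t\in\mathbb{R}^2$ with $D_{st}>0$, let $P_s>0$, $N_0>0$, $\gamma\in(0,\infty)$, $P_r=\gamma P_s$, and $\alpha\ge 2$. For a relay position $r$ in the interior of the segment $[s,t]$ and a power allocation $(P_{sr},P_{srt},P_{rt})\in[0,\infty)^3$ with $P_{sr}+P_{srt}\le P_s$ and $P_{rt}\le P_r$, define $$R_{sr}=\frac{P_{sr}}{D_{sr}^{\alpha}N_0},\quad R_{rt}=\frac{P_{rt}}{D_{rt}^{\alpha}N_0},\quad R_{srt}=\frac{P_{srt}}{D_{st}^{\alpha}N_0},\qquad R_{st}=R_{srt}+\min(R_{sr},R_{rt}).$$ Then the maximum of $R_{st}$ over all such relay positions and feasible power allocations is attained exactly at the relay position with $$D_{sr}^{*}=\frac{D_{st}}{1+\sqrt[\alpha]{\gamma}},\qquad D_{rt}^{*}=\frac{\sqrt[\alpha]{\gamma}\,D_{st}}{1+\sqrt[\alpha]{\gamma}},$$ the maximal value is $$R_{st}^{*}=\frac{P_s}{(D_{sr}^{*})^{\alpha}N_0}=\frac{\gamma P_s}{(D_{rt}^{*})^{\alpha}N_0},$$ and every power allocation achieving $R^*_{st}$ at this position has $P_{srt}=0$, i.e. all the flow is sent over the path $s\to r\to t$.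
   Context: $D_{uv}$ denotes the Euclidean distance between points $u,v\in\mathbb{R}^2$. The model is the low-SNR (wideband) relay channel with source $s$, relay $r$, destination $t$: the source splits its power between a hyperarc to $\{r,t\}$ (rate limited by the farther node $t$, namely $R_{srt}$) and a hyperarc to $r$ (rate $R_{sr}$), and the relay transmits to $t$ with power $P_{rt}$. *)

From Stdlib Require Import Reals.
Open Scope R_scope.

Definition pt := (R * R)%type.

Definition Dist (u v : pt) : R :=
  sqrt ((fst u - fst v) ^ 2 + (snd u - snd v) ^ 2).

Definition on_open_segment (s t r : pt) : Prop :=
  exists l : R, 0 < l < 1 /\
    r = (fst s + l * (fst t - fst s), snd s + l * (snd t - snd s)).

Definition feasible (Ps Pr Psr Psrt Prt : R) : Prop :=
  0 <= Psr /\ 0 <= Psrt /\ 0 <= Prt /\ Psr + Psrt <= Ps /\ Prt <= Pr.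

Definition rate (N0 alpha P D : R) : R := P / (Rpower D alpha * N0).

Definition Rst (N0 alpha : R) (s r t : pt) (Psr Psrt Prt : R) : R :=
  rate N0 alpha Psrt (Dist s t)
  + Rmin (rate N0 alpha Psr (Dist s r)) (rate N0 alpha Prt (Dist r t)).

From Stdlib Require Import Reals Lra Psatz.
Open Scope R_scope.

(* Put the relay at r = s + l (t - s) with 0 < l < 1, so D_sr = l D and
   D_rt = (1 - l) D with D = D_st.  Then R_st = T / (D^a N0), where
   T = P_srt + m and m = min(P_sr / l^a, P_rt / (1-l)^a) is the normalised
   throughput.  The pair (P_srt, m) is subject to the two budget constraints
   P_srt + m l^a <= P_s and m (1-l)^a <= gamma P_s, and T is maximised by a
   small linear-programming argument:
   - if l >= ls, then T <= P_s / l^a <= P_s / ls^a (direct-link bound);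
   - if l <  ls, then T <= P_s (1 + gamma h(l)) with h(l) = (1-l^a)/(1-l)^a,
     and h is strictly increasing (in x = l/(1-l) it reads (1+x)^a - x^a),
     so T < P_s (1 + gamma h(ls)) = P_s / ls^a.
   Here ls = 1/(1 + gamma^(1/a)) is characterised by (1-ls)^a = gamma ls^a.
   Equality forces l = ls and, because ls^a < 1, P_srt = 0.  The file first
   proves facts about Rpower and the gain h, then the budget LP, then the
   geometry of the segment, and finally assembles the theorem. *)

Lemma Rpower_pos x y : 0 < Rpower x y.
Proof. unfold Rpower; apply exp_pos. Qed.

Lemma Rpower_base_1 y : Rpower 1 y = 1.
Proof. unfold Rpower; rewrite ln_1, Rmult_0_r; apply exp_0. Qed.

Lemma Rpower_lt_1 a l : 0 < a -> 0 < l < 1 -> Rpower l a < 1.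
Proof. intros. rewrite <- (Rpower_base_1 a). apply Rlt_Rpower_l; lra. Qed.

Lemma Rpower_inv x a : 0 < x -> Rpower (/ x) a = / Rpower x a.
Proof.
  intros Hx. unfold Rpower. rewrite ln_Rinv by exact Hx.
  rewrite <- exp_Ropp. f_equal. ring.
Qed.

(* For a > 1 the gap (1+x)^a - x^a is strictly increasing on (0, oo):
   its derivative a ((1+x)^(a-1) - x^(a-1)) is positive. *)
Lemma power_gap_increasing a x y : 1 < a -> 0 < x -> x < y ->
  Rpower (1 + x) a - Rpower x a < Rpower (1 + y) a - Rpower y a.
Proof.
  intros Ha Hx Hxy.
  set (gap := fun z => Rpower (1 + z) a - Rpower z a).
  set (gap' := fun z => a * Rpower (1 + z) (a - 1) - a * Rpower z (a - 1)).
  assert (Hder : forall c, x <= c <= y -> derivable_pt_lim gap c (gap' c)).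
  { intros c Hc. apply derivable_pt_lim_minus; [| apply derivable_pt_lim_power; lra].
    replace (a * Rpower (1 + c) (a - 1)) with (a * Rpower (1 + c) (a - 1) * 1) by ring.
    apply (derivable_pt_lim_comp (fun z => 1 + z) (fun z => Rpower z a)).
    - pose proof (derivable_pt_lim_plus (fun _ => 1) (fun z => z) c 0 1
                    (derivable_pt_lim_const 1 c) (derivable_pt_lim_id c)) as Hshift.
      rewrite Rplus_0_l in Hshift. exact Hshift.
    - apply derivable_pt_lim_power; lra. }
  destruct (MVT_cor2 gap gap' x y Hxy Hder) as [c [Hmvt Hc]].
  assert (Hslope : Rpower c (a - 1) < Rpower (1 + c) (a - 1)) by (apply Rlt_Rpower_l; lra).
  assert (Hpos : 0 < gap' c * (y - x)).
  { unfold gap'. apply Rmult_lt_0_compat; [| lra].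
    rewrite <- Rmult_minus_distr_l. apply Rmult_lt_0_compat; lra. }
  unfold gap in Hmvt. lra.
Qed.

(* The relay gain h(l) = (1 - l^a) / (1 - l)^a: the extra normalised
   throughput per unit of relay power when the source keeps the rest. *)
Definition relay_gain (a l : R) : R := (1 - Rpower l a) / Rpower (1 - l) a.

Lemma relay_gain_as_gap a l : 0 < l < 1 ->
  relay_gain a l = Rpower (1 + l / (1 - l)) a - Rpower (l / (1 - l)) a.
Proof.
  intros Hl. unfold relay_gain.
  replace (1 + l / (1 - l)) with (/ (1 - l)) by (field; lra).
  unfold Rdiv at 2. rewrite <- Rpower_mult_distr by (try apply Rinv_0_lt_compat; lra).
  rewrite Rpower_inv by lra. field. apply Rgt_not_eq, Rpower_pos.
Qed.

Lemma relay_gain_increasing a l m : 1 < a -> 0 < l -> l < m -> m < 1 ->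
  relay_gain a l < relay_gain a m.
Proof.
  intros Ha Hl Hlm Hm.
  rewrite !relay_gain_as_gap by lra.
  apply power_gap_increasing; [exact Ha | apply Rdiv_lt_0_compat; lra |].
  apply (Rmult_lt_reg_r ((1 - l) * (1 - m))); [nra |].
  replace (l / (1 - l) * ((1 - l) * (1 - m))) with (l * (1 - m)) by (field; lra).
  replace (m / (1 - m) * ((1 - l) * (1 - m))) with (m * (1 - l)) by (field; lra).
  nra.
Qed.

Definition relay_throughput (a l Psr Psrt Prt : R) : R :=
  Psrt + Rmin (Psr / Rpower l a) (Prt / Rpower (1 - l) a).

(* The min-cut term m of the relayed flow uses at most P_sr and P_rt. *)
Lemma min_rate_budget u v A B : 0 <= u -> 0 <= v -> 0 < A -> 0 < B ->
  let m := Rmin (u / A) (v / B) in 0 <= m /\ m * A <= u /\ m * B <= v.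
Proof.
  intros Hu Hv HA HB m.
  assert (Hm1 : m <= u / A) by apply Rmin_l.
  assert (Hm2 : m <= v / B) by apply Rmin_r.
  assert (HuA : u / A * A = u) by (field; lra).
  assert (HvB : v / B * B = v) by (field; lra).
  split; [| split; nra].
  apply Rmin_glb; unfold Rdiv; apply Rmult_le_pos; try (left; apply Rinv_0_lt_compat); lra.
Qed.

Section BudgetLP.

Variables (a gamma Ps ls : R).
Hypothesis Ha : 1 < a.
Hypothesis HPs : 0 < Ps.
Hypothesis Hls : 0 < ls < 1.
Hypothesis Hbalance : Rpower (1 - ls) a = gamma * Rpower ls a.

(* Relay placed at or beyond ls: the source budget alone limits T. *)
Lemma throughput_far_relay l p m : ls <= l < 1 -> 0 <= p -> 0 <= m ->
  p + m * Rpower l a <= Ps ->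
  p + m <= Ps / Rpower ls a /\ (p + m = Ps / Rpower ls a -> l = ls /\ p = 0).
Proof.
  intros Hl Hp Hm Hsrc.
  assert (HA : 0 < Rpower l a < 1) by (split; [apply Rpower_pos | apply Rpower_lt_1; lra]).
  assert (HAs : 0 < Rpower ls a) by apply Rpower_pos.
  assert (HAsA : Rpower ls a <= Rpower l a) by (apply Rle_Rpower_l; lra).
  assert (Hdirect : (p + m) * Rpower l a <= Ps - p * (1 - Rpower l a)) by nra.
  assert (Hbound : (p + m) * Rpower ls a <= Ps - p * (1 - Rpower l a)) by nra.
  assert (HV : Ps / Rpower ls a * Rpower ls a = Ps) by (field; lra).
  split.
  - apply (Rmult_le_reg_r (Rpower ls a)); nra.
  - intros Heq. rewrite Heq in Hdirect, Hbound.
    destruct (Rle_lt_or_eq_dec ls l (proj1 Hl)) as [Hlt | ->]; [| split; nra].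
    assert (Rpower ls a < Rpower l a) by (apply Rlt_Rpower_l; lra).
    nra.
Qed.

(* Relay placed before ls: the relay budget limits the relayed part, and
   the gain h is strictly smaller than at ls. *)
Lemma throughput_near_relay l p m : 0 < l < ls -> 0 <= m ->
  p + m * Rpower l a <= Ps -> m * Rpower (1 - l) a <= gamma * Ps ->
  p + m < Ps / Rpower ls a.
Proof.
  intros Hl Hm Hsrc Hrel.
  assert (HA : 0 < Rpower l a < 1) by (split; [apply Rpower_pos | apply Rpower_lt_1; lra]).
  assert (HAs : 0 < Rpower ls a < 1) by (split; [apply Rpower_pos | apply Rpower_lt_1; lra]).
  assert (HB : 0 < Rpower (1 - l) a) by apply Rpower_pos.
  assert (Hgamma : 0 < gamma).
  { apply (Rmult_lt_reg_r (Rpower ls a)); [lra |]. rewrite <- Hbalance, Rmult_0_l. apply Rpower_pos. }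
  assert (Hgain : relay_gain a l < relay_gain a ls) by (apply relay_gain_increasing; lra).
  assert (Hgain_ls : gamma * relay_gain a ls = (1 - Rpower ls a) / Rpower ls a).
  { unfold relay_gain. rewrite Hbalance. field. lra. }
  assert (Hrelayed : m * (1 - Rpower l a) <= gamma * Ps * relay_gain a l).
  { unfold relay_gain.
    replace (m * (1 - Rpower l a)) with (m * Rpower (1 - l) a * ((1 - Rpower l a) / Rpower (1 - l) a))
      by (field; lra).
    apply Rmult_le_compat_r; [| exact Hrel].
    unfold Rdiv. apply Rmult_le_pos; [lra | left; apply Rinv_0_lt_compat, HB]. }
  assert (Hvalue : Ps / Rpower ls a = Ps + Ps * (gamma * relay_gain a ls)).
  { rewrite Hgain_ls. field. lra. }
  assert (Hstrict : gamma * Ps * relay_gain a l < Ps * (gamma * relay_gain a ls)).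
  { rewrite <- Rmult_assoc, (Rmult_comm Ps gamma).
    apply Rmult_lt_compat_l; [apply Rmult_lt_0_compat |]; lra. }
  rewrite Hvalue. nra.
Qed.

Lemma relay_throughput_bound l Psr Psrt Prt : 0 < l < 1 ->
  feasible Ps (gamma * Ps) Psr Psrt Prt ->
  let T := relay_throughput a l Psr Psrt Prt in
  T <= Ps / Rpower ls a /\ (T = Ps / Rpower ls a -> l = ls /\ Psrt = 0).
Proof.
  intros Hl [Hsr [Hsrt [Hrt [Hsrc Hrel]]]] T.
  destruct (min_rate_budget Psr Prt (Rpower l a) (Rpower (1 - l) a) Hsr Hrt
              (Rpower_pos _ _) (Rpower_pos _ _)) as [Hm [HmA HmB]].
  unfold T, relay_throughput.
  destruct (Rlt_or_le l ls) as [Hnear | Hfar].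
  - assert (Hlt := throughput_near_relay l Psrt _ ltac:(lra) Hm ltac:(lra) ltac:(lra)).
    split; [lra | intros; lra].
  - apply throughput_far_relay; lra.
Qed.

End BudgetLP.

Lemma dist_on_segment s t l : 0 < l < 1 ->
  let r := (fst s + l * (fst t - fst s), snd s + l * (snd t - snd s)) in
  Dist s r = l * Dist s t /\ Dist r t = (1 - l) * Dist s t.
Proof.
  intros Hl r. unfold Dist, r; cbn [fst snd].
  set (d2 := (fst s - fst t) ^ 2 + (snd s - snd t) ^ 2).
  assert (Hd2 : 0 <= d2) by (unfold d2; apply Rplus_le_le_0_compat; apply pow2_ge_0).
  split.
  - replace ((fst s - (fst s + l * (fst t - fst s))) ^ 2 + (snd s - (snd s + l * (snd t - snd s))) ^ 2)
      with ((l * l) * d2) by (unfold d2; ring).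
    rewrite sqrt_mult_alt, sqrt_square by nra. reflexivity.
  - replace ((fst s + l * (fst t - fst s) - fst t) ^ 2 + (snd s + l * (snd t - snd s) - snd t) ^ 2)
      with (((1 - l) * (1 - l)) * d2) by (unfold d2; ring).
    rewrite sqrt_mult_alt, sqrt_square by nra. reflexivity.
Qed.

Lemma Rmin_div_r u v K : 0 < K -> Rmin (u / K) (v / K) = Rmin u v / K.
Proof.
  intros HK. assert (HiK : 0 < / K) by (apply Rinv_0_lt_compat; lra).
  destruct (Rle_dec u v).
  - rewrite (Rmin_left u v) by lra. apply Rmin_left. unfold Rdiv. nra.
  - rewrite (Rmin_right u v) by lra. apply Rmin_right. unfold Rdiv. nra.
Qed.

Lemma rate_scaled N0 a P l D : 0 < N0 -> 0 < l -> 0 < D ->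
  rate N0 a P (l * D) = (P / Rpower l a) / (Rpower D a * N0).
Proof.
  intros HN Hl HD. unfold rate. rewrite <- Rpower_mult_distr by lra.
  assert (Rpower l a <> 0) by apply Rgt_not_eq, Rpower_pos.
  assert (Rpower D a <> 0) by apply Rgt_not_eq, Rpower_pos.
  field. repeat split; auto; lra.
Qed.

Lemma Rst_normalised N0 a s t l Psr Psrt Prt : 0 < N0 -> 0 < Dist s t -> 0 < l < 1 ->
  let r := (fst s + l * (fst t - fst s), snd s + l * (snd t - snd s)) in
  Rst N0 a s r t Psr Psrt Prt = relay_throughput a l Psr Psrt Prt / (Rpower (Dist s t) a * N0).
Proof.
  intros HN HD Hl r.
  destruct (dist_on_segment s t l Hl) as [Hsr Hrt]. fold r in Hsr, Hrt.
  assert (HK : 0 < Rpower (Dist s t) a * N0) by (apply Rmult_lt_0_compat; [apply Rpower_pos | lra]).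
  unfold Rst, relay_throughput. rewrite Hsr, Hrt, !rate_scaled by lra.
  rewrite Rmin_div_r by exact HK. unfold rate. field. split; [lra | apply Rgt_not_eq, Rpower_pos].
Qed.

Theorem lemma2 (s t : pt) (Ps N0 gamma alpha : R) :
  0 < Dist s t -> 0 < Ps -> 0 < N0 -> 0 < gamma -> 2 <= alpha ->
  let g := Rpower gamma (1 / alpha) in
  let Dsr := Dist s t / (1 + g) in
  let Drt := g * Dist s t / (1 + g) in
  let Rstar := Ps / (Rpower Dsr alpha * N0) in
  Rstar = gamma * Ps / (Rpower Drt alpha * N0) /\
  (forall (r : pt) (Psr Psrt Prt : R),
      on_open_segment s t r -> feasible Ps (gamma * Ps) Psr Psrt Prt ->
      Rst N0 alpha s r t Psr Psrt Prt <= Rstar) /\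
  (exists (r : pt) (Psr Psrt Prt : R),
      on_open_segment s t r /\ feasible Ps (gamma * Ps) Psr Psrt Prt /\
      Dist s r = Dsr /\ Dist r t = Drt /\
      Rst N0 alpha s r t Psr Psrt Prt = Rstar) /\
  (forall (r : pt) (Psr Psrt Prt : R),
      on_open_segment s t r -> feasible Ps (gamma * Ps) Psr Psrt Prt ->
      Rst N0 alpha s r t Psr Psrt Prt = Rstar ->
      Dist s r = Dsr /\ Dist r t = Drt /\ Psrt = 0).
Proof.
  intros HD HPs HN Hgam Ha g Dsr Drt Rstar.
  set (D := Dist s t) in *.
  set (ls := 1 / (1 + g)).
  assert (Hg : 0 < g) by apply Rpower_pos.
  assert (Hls_pos : 0 < ls) by (unfold ls; apply Rdiv_lt_0_compat; lra).
  assert (Hls_compl : 1 - ls = g * ls) by (unfold ls; field; lra).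
  assert (Hls : 0 < ls < 1) by nra.
  assert (EDsr : Dsr = ls * D) by (unfold Dsr, ls; field; lra).
  assert (EDrt : Drt = (1 - ls) * D) by (unfold Drt, ls; field; lra).
  assert (Hbalance : Rpower (1 - ls) alpha = gamma * Rpower ls alpha).
  { rewrite Hls_compl, <- Rpower_mult_distr by lra. unfold g. rewrite Rpower_mult.
    replace (1 / alpha * alpha) with 1 by (field; lra). rewrite Rpower_1 by lra. reflexivity. }
  set (K := Rpower D alpha * N0).
  assert (HK : 0 < K) by (apply Rmult_lt_0_compat; [apply Rpower_pos | lra]).
  assert (ERstar : Rstar = (Ps / Rpower ls alpha) / K).
  { unfold Rstar. rewrite EDsr. apply rate_scaled; lra. }
  assert (Hbound := relay_throughput_bound alpha gamma Ps ls ltac:(lra) HPs Hls Hbalance).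
  split; [| split; [| split]].
  - change (Rstar = rate N0 alpha (gamma * Ps) Drt).
    rewrite ERstar, EDrt, rate_scaled, Hbalance by lra. fold K.
    field. repeat split; [apply Rgt_not_eq, Rpower_pos | lra | lra].
  - intros r Psr Psrt Prt [l [Hl ->]] Hf.
    rewrite (Rst_normalised N0 alpha s t l Psr Psrt Prt HN HD Hl), ERstar. fold D K.
    apply Rmult_le_compat_r; [left; apply Rinv_0_lt_compat, HK |].
    apply (Hbound l Psr Psrt Prt Hl Hf).
  - destruct (dist_on_segment s t ls Hls) as [Hsr Hrt].
    eexists _, Ps, 0, (gamma * Ps).
    split; [exists ls; split; [exact Hls | reflexivity] |].
    split; [unfold feasible; nra |].
    split; [rewrite Hsr, EDsr; reflexivity |].
    split; [rewrite Hrt, EDrt; reflexivity |].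
    rewrite (Rst_normalised N0 alpha s t ls Ps 0 (gamma * Ps) HN HD Hls), ERstar. fold D K. f_equal.
    unfold relay_throughput. rewrite Hbalance.
    replace (gamma * Ps / (gamma * Rpower ls alpha)) with (Ps / Rpower ls alpha)
      by (field; assert (Rpower ls alpha <> 0) by apply Rgt_not_eq, Rpower_pos; split; lra).
    rewrite Rmin_left by lra. ring.
  - intros r Psr Psrt Prt [l [Hl ->]] Hf Heq.
    destruct (dist_on_segment s t l Hl) as [Hsr Hrt].
    rewrite (Rst_normalised N0 alpha s t l Psr Psrt Prt HN HD Hl), ERstar in Heq. fold D K in Heq.
    assert (Hnorm : relay_throughput alpha l Psr Psrt Prt = Ps / Rpower ls alpha).
    { apply (Rmult_eq_reg_r (/ K)); [exact Heq | apply Rgt_not_eq, Rinv_0_lt_compat, HK]. }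
    destruct (proj2 (Hbound l Psr Psrt Prt Hl Hf) Hnorm) as [-> ->].
    split; [rewrite Hsr, EDsr | split; [rewrite Hrt, EDrt |]]; reflexivity.
Qed.
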